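(* For every integer $n\ge 0$, $c_1(n)$ is odd if and only if $n=j(j+1)/2$ for some integer $j\ge 0$.
   Context: A partition of $n\ge 0$ is a finite multiset of positive integers (its parts) summing to $n$; the empty partition is the unique partition of $0$. For $n\ge 0$, $c_1(n)$ denotes the number of partitions $\lambda$ of $n$ such that either (a) all parts of $\lambda$ are distinct, or (b) there is an integer $j\ge 1$ such that each of the integers $1,2,\dots,2j-1$ appears in $\lambda$ at least twice, and every integer greater than $2j$ appears in $\lambda$ at most once (the integer $2j$ may appear any number of times, including zero). *)

From mathcomp Require Import all_boot.
Set Implicit Arguments. Unset Strict Implicit. Unset Printing Implicit Defensive.

(* A partition of n is encoded by its multiplicity function:
   m : {ffun 'I_n -> nat}, where m i is the number of times the part (i+1)
   appears.  Parts of a partition of n are at most n, so this covers all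
   partitions; the encoding is bijective onto { m | \sum_i (i+1) * m i = n }.
   Multiplicities are bounded by n, so we use 'I_n.+1 as codomain to get a
   finite type. *)
Definition mtype (n : nat) := {ffun 'I_n -> 'I_n.+1}.

(* multiplicity of the positive integer k in the partition m (0 if k > n or k = 0) *)
Definition mult (n : nat) (m : mtype n) (k : nat) : nat :=
  match insub k.-1 with
  | Some i => if k is 0 then 0 else nat_of_ord (m i)
  | None => 0
  end.

Definition is_partition (n : nat) (m : mtype n) : bool :=
  \sum_(i < n) (i.+1 * m i) == n.

Definition all_distinct (n : nat) (m : mtype n) : bool :=
  [forall i : 'I_n, m i <= 1].

(* Such j necessarily satisfies
   2j - 1 <= n (the parts 1..2j-1 are present), so j ranges over 'I_n.+1 *)
Definition cond_b (n : nat) (m : mtype n) : bool :=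
  [exists j : 'I_n.+1,
     (0 < j) &&
     [forall k : 'I_n.+1, ((1 <= k <= (2 * j).-1) ==> (2 <= mult m k))
                          && ((2 * j < k) ==> (mult m k <= 1))]].

Definition c1 (n : nat) : nat :=
  #|[set m : mtype n | is_partition m && (all_distinct m || cond_b m)]|.

From mathcomp Require Import all_boot all_algebra.
From mathcomp Require Import zify ring.
Set Implicit Arguments. Unset Strict Implicit. Unset Printing Implicit Defensive.
Import GRing.Theory.
Local Open Scope ring_scope.

(* A partition satisfies (a) or (b) iff it has a "threshold"
   t <= n: the parts <= t occur at least twice and the parts > t at most
   once; the threshold is unique, so c1(n) is the sum over t of the number of
   partitions of n with threshold t.

   Over a commutative ring R of characteristic 2,
   modulo X^(n+1), write (q)_M = prod_(1 <= i <= M) (1 + q^i) and [M; t]_q for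
   the Gaussian binomials.  Partitions with threshold t have generating
   function X^(t(t+1)) (X)_n / (X^2)_t = X^(t(t+1)) (X)_n [2n; t]_(X^2), so
   by the q-binomial theorem their sum over t is (X)_n (X^2)_n.  Separating
   odd and even parts and squaring in characteristic 2 turns this into
   prod_(odd k < 4n) (1 + X^k) * (X^4)_(2n), which a finite form of Jacobi's
   triple product identity reduces to a sum of X^(T_k), k <= 2n, T_k the
   triangular numbers.  Reading off the coefficient of X^n in F_2 gives the
   parity of c1(n). *)

Section Truncation.
Variable R : nzRingType.
Implicit Types p q : {poly R}.

Definition congX (m : nat) p q := forall i, (i < m)%N -> p`_i = q`_i.

Lemma congX_refl m p : congX m p p. Proof. by []. Qed.

Lemma congX_sym m p q : congX m p q -> congX m q p.
Proof. by move=> h i hi; rewrite h. Qed.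

Lemma congX_trans m p q r : congX m p q -> congX m q r -> congX m p r.
Proof. by move=> h1 h2 i hi; rewrite h1 // h2. Qed.

Lemma congX_le m m' p q : congX m p q -> (m' <= m)%N -> congX m' p q.
Proof. by move=> h hm i hi; apply: h; apply: leq_trans hm. Qed.

Lemma congXD m p p' q q' :
  congX m p p' -> congX m q q' -> congX m (p + q) (p' + q').
Proof. by move=> h1 h2 i hi; rewrite !coefD h1 // h2. Qed.

Lemma congXM m p p' q q' :
  congX m p p' -> congX m q q' -> congX m (p * q) (p' * q').
Proof.
move=> h1 h2 i hi; rewrite !coefM; apply: eq_bigr => j _.
rewrite h1; last by apply: leq_ltn_trans hi; rewrite -ltnS.
by rewrite h2 //; apply: leq_ltn_trans hi; apply: leq_subr.
Qed.

Lemma congX_sum m (I : finType) (P : pred I) (F G : I -> {poly R}) :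
  (forall i, P i -> congX m (F i) (G i)) ->
  congX m (\sum_(i | P i) F i) (\sum_(i | P i) G i).
Proof. by move=> h; apply: (big_ind2 (congX m)) => // *; apply: congXD. Qed.

Lemma congX_prod m (I : finType) (P : pred I) (F G : I -> {poly R}) :
  (forall i, P i -> congX m (F i) (G i)) ->
  congX m (\prod_(i | P i) F i) (\prod_(i | P i) G i).
Proof. by move=> h; apply: (big_ind2 (congX m)) => // *; apply: congXM. Qed.

Lemma congX_XnM0 m a p : (m <= a)%N -> congX m ('X^a * p) 0.
Proof. by move=> ha i hi; rewrite coefXnM coef0 (leq_trans hi ha). Qed.

Lemma congX_1Xn m a : (m <= a)%N -> congX m (1 + 'X^a) 1.
Proof.
move=> ha; rewrite -[X in congX _ _ X]addr0; apply: congXD => //.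
by rewrite -['X^a]mulr1; apply: congX_XnM0.
Qed.

Lemma congX_shift m a p q :
  congX m p q -> congX (a + m) ('X^a * p) ('X^a * q).
Proof.
move=> h i hi; rewrite !coefXnM; case: ltnP => // hai.
by apply: h; rewrite ltn_subLR.
Qed.

Lemma congX_unshift m a p q :
  congX (a + m) ('X^a * p) ('X^a * q) -> congX m p q.
Proof.
move=> h i hi; have := h (a + i)%N; rewrite !coefXnM.
have -> : (a + i < a)%N = false by rewrite ltnNge leq_addr.
by rewrite addKn; apply; rewrite ltn_add2l.
Qed.

End Truncation.

Fixpoint tri (t : nat) : nat := if t is t'.+1 then (tri t' + t)%N else 0%N.

Lemma tri2 t : (2 * tri t = t * t.+1)%N.
Proof. by elim: t => [|t IH] //=; rewrite mulnDr IH; lia. Qed.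

Lemma tri_mono : {homo tri : a b / (a <= b)%N}.
Proof. by move=> a b hab; rewrite -(leq_pmul2l (ltn0Sn 1)) !tri2 leq_mul. Qed.

Lemma leq_tri k : (k <= tri k)%N.
Proof. by rewrite -(leq_pmul2l (ltn0Sn 1)) tri2; nia. Qed.

Lemma tri_inj : injective tri.
Proof.
move=> x y h; have := tri2 x; have := tri2 y; rewrite h => h1 h2.
by case: (ltngtP x y) => // hxy; exfalso; nia.
Qed.

Lemma triangularP n :
  reflect (exists j : nat, n = (j * (j + 1)) %/ 2)%N [exists k : 'I_n.+1, tri k == n].
Proof.
have tri_div k : tri k = (k * (k + 1) %/ 2)%N by rewrite addn1 -tri2 mulKn.
apply: (iffP existsP) => [[k /eqP <-] | [k hk]]; first by exists k.
have hkn : (k < n.+1)%N by rewrite ltnS hk -tri_div leq_tri.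
by exists (Ordinal hkn); rewrite /= tri_div hk.
Qed.

Definition threshold n t (m : mtype n) : bool :=
  [forall i : 'I_n, if (i < t)%N then (2 <= m i)%N else (m i <= 1)%N].

Lemma multE n (m : mtype n) (i : 'I_n) : mult m i.+1 = m i.
Proof.
rewrite /mult /=; case: insubP => [j _ hj | h]; last by rewrite ltn_ord in h.
by congr (nat_of_ord (m _)); apply: val_inj.
Qed.

Lemma multE_pred n (m : mtype n) k (hk : (k.-1 < n)%N) :
  (0 < k)%N -> mult m k = m (Ordinal hk).
Proof. by case: k hk => // k hk _; rewrite -(multE m (Ordinal hk)). Qed.

Lemma threshold_uniq n (m : mtype n) t1 t2 :
  (t1 <= n)%N -> (t2 <= n)%N -> threshold t1 m -> threshold t2 m -> t1 = t2.
Proof.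
wlog h12 : t1 t2 / (t1 <= t2)%N.
  move=> W h1 h2 g1 g2; case: (leqP t1 t2) => h; first exact: W.
  by apply/esym; apply: W => //; apply: ltnW.
move=> _ h2 /forallP g1 /forallP g2; apply/eqP; rewrite eqn_leq h12 leqNgt /=.
apply/negP => hlt; have hi : (t1 < n)%N by apply: leq_trans hlt h2.
by have := g1 (Ordinal hi); have := g2 (Ordinal hi); rewrite /= hlt ltnn; lia.
Qed.

(* Condition (b) with parameter j gives threshold 2j or min(2j-1, n),
   according to whether the part 2j occurs at least twice. *)
Lemma cond_b_threshold n (m : mtype n) :
  cond_b m -> [exists t : 'I_n.+1, threshold t m].
Proof.
case/existsP => j /andP [j_gt0 /forallP hj].
have hm (i : 'I_n) :
    ((i.+1 <= (2 * j).-1)%N -> (2 <= m i)%N) /\ ((2 * j < i.+1)%N -> (m i <= 1)%N).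
  have hi : (i.+1 < n.+1)%N by rewrite ltnS.
  have /andP [hA hB] := hj (Ordinal hi); rewrite /= multE in hA hB.
  by split=> h; [apply: (implyP hA) | apply: (implyP hB)].
apply/existsP; case: (boolP ((2 * j <= n)%N && (2 <= mult m (2 * j))%N)).
  case/andP=> le2j_n mult2j; exists (Ordinal (le2j_n : (2 * j < n.+1)%N)).
  apply/forallP => i /=; have [hA hB] := hm i.
  case: ifP => hit; last by apply: hB; lia.
  case: (leqP i.+1 (2 * j).-1) => h; first exact: hA.
  have e : i.+1 = (2 * j)%N by lia.
  by rewrite -(multE m i) e.
move=> hb; have ht : (minn (2 * j).-1 n < n.+1)%N by rewrite ltnS geq_minr.
exists (Ordinal ht); apply/forallP => i /=; have [hA hB] := hm i.
case: ifP => hit; first by apply: hA; lia.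
case: (ltnP (2 * j) i.+1) => h; first exact: hB.
have e : i.+1 = (2 * j)%N by have := ltn_ord i; lia.
by move: hb; rewrite -e multE ltn_ord /= -leqNgt.
Qed.

(* Conversely, threshold 0 is condition (a), and a threshold t > 0 gives
   condition (b) with j = (t+1)/2. *)
Lemma threshold_cond n (m : mtype n) (t : 'I_n.+1) :
  threshold t m -> all_distinct m || cond_b m.
Proof.
move=> /forallP ht; case: (posnP t) => [t0 | tpos].
  by apply/orP; left; apply/forallP => i; have := ht i; rewrite t0 ltn0.
apply/orP; right; have tn := ltn_ord t.
have hj : (t.+1 %/ 2 < n.+1)%N by lia.
apply/existsP; exists (Ordinal hj) => /=; apply/andP; split; first by lia.
apply/forallP => k; have k_le := ltn_ord k.
have hkn : (k.-1 < n)%N by lia.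
apply/andP; split; apply/implyP => hk.
  rewrite (multE_pred m hkn); last by lia.
  by have := ht (Ordinal hkn); have -> : (k.-1 < t)%N by lia.
rewrite (multE_pred m hkn); last by lia.
by have := ht (Ordinal hkn); have -> : (k.-1 < t)%N = false by lia.
Qed.

Lemma cond_threshold n (m : mtype n) :
  (all_distinct m || cond_b m) = [exists t : 'I_n.+1, threshold t m].
Proof.
apply/idP/existsP => [|[t /threshold_cond //]].
case/orP => [/forallP hd | /cond_b_threshold /existsP //].
by exists ord0; apply/forallP => i; exact: hd.
Qed.

Lemma c1_sum n :
  c1 n = (\sum_(t < n.+1) #|[set m : mtype n | is_partition m && threshold t m]|)%N.
Proof.
have cardE (T : finType) (A : {pred T}) : #|A| = (\sum_(x : T) (x \in A : nat))%N.
  by rewrite -sum1_card big_mkcond.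
rewrite /c1 cardE; under [in RHS]eq_bigr => t _ do rewrite cardE.
rewrite exchange_big /=; apply: eq_bigr => m _; rewrite inE cond_threshold.
case: (boolP [exists t : 'I_n.+1, threshold t m]) => [/existsP [t0 g0] | no_t];
  last first.
  by rewrite andbF big1 // => t _; rewrite inE (negbTE (existsPn no_t t)) andbF.
rewrite (bigD1 t0) //= big1 ?inE ?g0 ?addn0 // => t ne_t; rewrite inE.
case: (boolP (threshold t m)) => g; rewrite ?andbF //; case/eqP: ne_t.
by apply: val_inj; apply: (threshold_uniq _ _ g g0); rewrite -ltnS.
Qed.

Section CharTwoSeries.
Variable R : comNzRingType.
Hypothesis pchar2R : (2 \in [pchar R])%N.
Implicit Types p q : {poly R}.

Lemma addpp p : p + p = 0.
Proof. by apply: addrr_pchar2; rewrite pchar_poly. Qed.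

Lemma sqr1X p : (1 + p) * (1 + p) = 1 + p * p.
Proof.
have -> : (1 + p) * (1 + p) = 1 + p * p + (p + p) by ring.
by rewrite addpp addr0.
Qed.

(* qpoch s t = prod_(1 <= i <= t) (1 + X^(s i)), the q-Pochhammer symbol
   (-q; q)_t at q = X^s; in characteristic 2 it is also (q; q)_t. *)
Definition qpoch (s t : nat) : {poly R} := \prod_(i < t) (1 + 'X^(s * i.+1)).

(* qbin s M t = the Gaussian binomial [M; t] at q = X^s, defined by the
   Pascal recurrence [M+1; t+1] = [M; t] + q^(t+1) [M; t+1]. *)
Fixpoint qbin (s M t : nat) {struct M} : {poly R} :=
  match M, t with
  | _, 0 => 1
  | 0, _.+1 => 0
  | M'.+1, t'.+1 => qbin s M' t' + 'X^(s * t) * qbin s M' t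
  end.

Lemma qbin0 s M : qbin s M 0 = 1. Proof. by case: M. Qed.

Lemma qbinS s M t :
  qbin s M.+1 t.+1 = qbin s M t + 'X^(s * t.+1) * qbin s M t.+1.
Proof. by []. Qed.

Lemma qbin_gt s M t : (M < t)%N -> qbin s M t = 0.
Proof.
elim: M t => [|M IH] [|t] //= ht.
by rewrite !IH ?mulr0 ?addr0 // ltnW.
Qed.

Lemma qbinS' s M t :
  qbin s M.+1 t.+1 = 'X^(s * (M - t)) * qbin s M t + qbin s M t.+1.
Proof.
elim: M t => [|M IH] t.
  by rewrite qbinS sub0n muln0 expr0 mul1r; case: t => /= *; ring.
case: t => [|t].
  rewrite qbinS !qbin0 [in LHS]IH [in RHS]qbinS !qbin0 subn0 mulr1.
  have -> : 'X^(s * M.+1) = 'X^(s * 1) * 'X^(s * M) :> {poly R}.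
    by rewrite -exprD -mulnDr.
  rewrite muln1; ring.
rewrite qbinS [in LHS]IH [in LHS](IH t.+1) [in RHS]qbinS [in RHS](qbinS s M t.+1).
rewrite subSS; case: (leqP t.+1 M) => htM; last first.
  by rewrite (@qbin_gt s M t.+1) // !mulr0; ring.
have e : 'X^(s * t.+2) * ('X^(s * (M - t.+1)) * qbin s M t.+1) =
         'X^(s * (M - t)) * ('X^(s * t.+1) * qbin s M t.+1) :> {poly R}.
  by rewrite !mulrA -!exprD -!mulnDr; congr ('X^(s * _) * _); lia.
rewrite mulrDr e; ring.
Qed.

(* In characteristic 2, [M; t] is the inverse of (q; q)_t up to precision
   q^(M-t+1): the numerator (q^(M-t+1); q)_t of [M; t] is 1 modulo it. *)
Lemma qbin_qpoch s M t :
  (t <= M)%N -> congX (s * (M - t).+1) (qbin s M t * qpoch s t) 1.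
Proof.
elim: M t => [|M IH] [|t] //; try by rewrite /qpoch big_ord0 qbin0 mulr1.
rewrite ltnS => ht.
rewrite qbinS /qpoch big_ord_recr /= -/(qpoch s t) subSS.
set Y : {poly R} := 'X^(s * t.+1).
have -> : (qbin s M t + Y * qbin s M t.+1) * (qpoch s t * (1 + Y)) =
          (qbin s M t * qpoch s t) * (1 + Y)
          + Y * (qbin s M t.+1 * (qpoch s t * (1 + Y))) by ring.
have h1 : congX (s * (M - t).+1) ((qbin s M t * qpoch s t) * (1 + Y)) (1 + Y).
  by rewrite -{2}(mul1r (1 + Y)); apply: congXM => //; apply: IH.
have h2 : congX (s * (M - t).+1) (Y * (qbin s M t.+1 * (qpoch s t * (1 + Y)))) Y.
  case: (leqP t.+1 M) => htM.
    have := IH _ htM; rewrite /qpoch big_ord_recr /= -/(qpoch s t) => h.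
    rewrite /Y -[X in congX _ _ X]mulr1.
    apply: congX_le (congX_shift (a := (s * t.+1)%N) h) _.
    by rewrite -mulnDr leq_mul2l; apply/orP; right; lia.
  have -> : t = M by lia.
  rewrite qbin_gt // mul0r mulr0 => i hi.
  rewrite coef0 /Y coefXn; case: eqP hi => // ->.
  by rewrite subnn muln1 ltnNge leq_pmulr.
by have := congXD h1 h2; rewrite -addrA addpp addr0.
Qed.

(* (q; q)_t is stable under truncation: extra factors are 1 to order q^(t+1). *)
Lemma qpoch_ext s t K : (t <= K)%N -> congX (s * t.+1) (qpoch s K) (qpoch s t).
Proof.
elim: K => [|K IH] hK; first by move: hK; rewrite leqn0 => /eqP ->.
case: (ltnP t K.+1) => htK; last by have -> : t = K.+1 by apply/eqP; rewrite eqn_leq hK.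
rewrite /qpoch big_ord_recr /= -/(qpoch s K) -[X in congX _ _ X]mulr1.
apply: congXM; first exact: IH.
by apply: congX_1Xn; rewrite leq_mul2l htK orbT.
Qed.

Lemma qbin_qpoch_full s M t : (t <= M)%N ->
  congX (s * minn (M - t).+1 t.+1) (qbin s M t * qpoch s M) 1.
Proof.
move=> ht; apply: (@congX_trans _ _ _ (qbin s M t * qpoch s t)).
  apply: congX_le (congXM (congX_refl (qbin s M t)) (qpoch_ext (s:=s) ht)) _.
  by rewrite leq_mul2l geq_minr orbT.
by apply: congX_le (qbin_qpoch (s:=s) ht) _; rewrite leq_mul2l geq_minl orbT.
Qed.

Lemma qbinomial s M : \sum_(t < M.+1) 'X^(s * tri t) * qbin s M t = qpoch s M.
Proof.
elim: M => [|M IH].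
  by rewrite big_ord_recl big_ord0 /qpoch big_ord0 /= muln0 expr0 mul1r addr0.
rewrite [RHS]/qpoch [RHS]big_ord_recr /= -/(qpoch s M) -IH.
rewrite big_ord_recl /= muln0 expr0 ?qbin0 mul1r.
under eq_bigr => i _ do rewrite add0n -[bump 0 i]/(i.+1) -qbinS qbinS' mulrDr.
rewrite big_split /= mulrDr mulr1.
set Sa := \sum_(i < M.+1) 'X^(s * (tri i + i.+1)) * ('X^(s * (M - i)) * qbin s M i).
set Sb := \sum_(i < M.+1) 'X^(s * (tri i + i.+1)) * qbin s M i.+1.
rewrite [Sa + Sb]addrC addrA; congr (_ + _); last first.
  rewrite /Sa mulr_suml; apply: eq_bigr => i _.
  rewrite mulrA -!exprD mulrAC -exprD; congr ('X^_ * _).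
  by rewrite -!mulnDr; congr (s * _); have := ltn_ord i; rewrite /= addnS; lia.
rewrite [RHS]big_ord_recl /= muln0 expr0 ?qbin0 mul1r; congr (_ + _).
by rewrite /Sb big_ord_recr /= qbin_gt // mulr0 addr0.
Qed.

(* Its truncation: the terms with t >= k only contribute from q^(tri k) on. *)
Lemma qbinomial_trunc s M k : (k <= M.+1)%N ->
  congX (s * tri k) (\sum_(t < k) 'X^(s * tri t) * qbin s M t) (qpoch s M).
Proof.
move=> hk; set F := fun t => 'X^(s * tri t) * qbin s M t.
rewrite -(qbinomial s M) -!(big_mkord xpredT F).
rewrite (@big_cat_nat _ _ _ k 0 M.+1 _ _ (leq0n _) hk) /= -[X in congX _ X _]addr0.
apply: congXD => //; apply: congX_sym; rewrite big_nat_cond.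
apply: (big_ind (fun p => congX (s * tri k) p 0)) => //.
  by move=> p q hp hq; rewrite -[0]addr0; apply: congXD.
move=> t /andP [/andP [hkt _] _]; apply: congX_XnM0.
by rewrite leq_mul2l tri_mono ?orbT.
Qed.

(* A finite Jacobi triple product identity:
   X^N * prod_(i<N) (1 + X^(4i+3)) (1 + X^(4i+1))
     = sum_(j <= 2N) X^(jexp N j) [2N; j]_(X^4),
   where jexp N j = j + 2 (j - N)^2.  It is proved by induction on N via a
   three-term recurrence for the summands jterm N j. *)
(* jexp is locked: its value is only ever used through arithmetic. *)
Definition jexp (N j : nat) : nat := locked (j + 2 * ((j - N) + (N - j)) ^ 2)%N.

Definition jterm (N j : nat) : {poly R} := 'X^(jexp N j) * qbin 4 (2 * N) j.

Lemma jterm_gt N j : (2 * N < j)%N -> jterm N j = 0.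
Proof. by move=> h; rewrite /jterm qbin_gt ?mulr0. Qed.

Lemma doubleS N : (2 * N.+1 = (2 * N).+2)%N. Proof. lia. Qed.

(* The recurrence for jterm; in jterm1 and jtermS the base q = X^4 is kept
   abstract, so that powers of X with literal exponents are not unfolded by
   conversion. *)
Lemma jterm0 N : jterm N.+1 0 = 'X^(4 * N + 2) * jterm N 0.
Proof. by rewrite /jterm !qbin0 !mulr1 -exprD /jexp -!lock; congr ('X^_); nia. Qed.

Lemma jterm1 N :
  jterm N.+1 1 = 'X^(4 * N + 2) * jterm N 1 + ('X + 'X^(8 * N + 5)) * jterm N 0.
Proof.
pose s := 4%N; have hs : s = 4%N by [].
rewrite /jterm -[qbin 4]/(qbin s); clearbody s.
rewrite doubleS qbinS qbin0 qbinS' qbin0 subn0 !mulr1.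
have e1 : 'X^(jexp N.+1 1) * 'X^(s * 1) = 'X^(4 * N + 2) * 'X^(jexp N 1) :> {poly R}.
  by rewrite -!exprD /jexp -!lock hs; congr ('X^_); nia.
have e2 : 'X^(jexp N.+1 1) * 'X^(s * 1) * 'X^(s * (2 * N))
          = 'X^(8 * N + 5) * 'X^(jexp N 0) :> {poly R}.
  by rewrite -!exprD /jexp -!lock hs; congr ('X^_); nia.
have e3 : 'X^(jexp N.+1 1) = 'X * 'X^(jexp N 0) :> {poly R}.
  by rewrite -exprS /jexp -!lock; congr ('X^_); nia.
rewrite !mulrDr !mulrA mulr1 e2 e1 e3; ring.
Qed.

Lemma jtermS N j :
  jterm N.+1 j.+2 = 'X^(4 * N + 2) * jterm N j.+2
    + ('X + 'X^(8 * N + 5)) * jterm N j.+1 + 'X^(4 * N + 4) * jterm N j.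
Proof.
pose s := 4%N; have hs : s = 4%N by [].
rewrite /jterm -[qbin 4]/(qbin s); clearbody s.
rewrite doubleS qbinS !qbinS'.
rewrite !mulrDr !mulrA -!exprD mulrDl -exprS -!exprD.
have Xeq a b k : ((k <= 2 * N)%N -> a = b) ->
    'X^a * qbin s (2 * N) k = 'X^b * qbin s (2 * N) k.
  by case: (leqP k (2 * N)) => h e; [rewrite e | rewrite qbin_gt // !mulr0].
rewrite (Xeq (jexp N.+1 j.+2 + s * (2 * N - j))%N (4 * N + 4 + jexp N j)%N);
  last by rewrite /jexp -!lock hs => h; case: (leqP N j) => ?; nia.
rewrite (Xeq (jexp N.+1 j.+2 + s * j.+2 + s * (2 * N - j.+1))%N
             (8 * N + 5 + jexp N j.+1)%N);
  last by rewrite /jexp -!lock hs => h; case: (leqP N j) => ?; nia.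
rewrite (Xeq (jexp N.+1 j.+2 + s * j.+2)%N (4 * N + 2 + jexp N j.+2)%N);
  last by rewrite /jexp -!lock hs => _; case: (leqP N j) => ?; nia.
rewrite (Xeq (jexp N.+1 j.+2) (jexp N j.+1).+1%N);
  last by rewrite /jexp -!lock => _; case: (leqP N j) => ?; nia.
ring.
Qed.

Definition oddpoch (N : nat) : {poly R} :=
  \prod_(i < N) ((1 + 'X^(4 * i + 3)) * (1 + 'X^(4 * i + 1))).

Lemma jterm_sum_ext N K : (2 * N < K)%N ->
  \sum_(j < K) jterm N j = \sum_(j < (2 * N).+1) jterm N j.
Proof.
move=> hK; rewrite -!(big_mkord xpredT).
rewrite (@big_cat_nat _ _ _ (2 * N).+1 0 K _ _ (leq0n _) hK) /=.
rewrite [X in _ + X]big1_seq ?addr0 // => j.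
by rewrite mem_iota => /andP [_ /andP [h _]]; rewrite jterm_gt.
Qed.

Lemma oddpoch_step_factor N :
  'X * ((1 + 'X^(4 * N + 3)) * (1 + 'X^(4 * N + 1)))
  = 'X^(4 * N + 2) + ('X + 'X^(8 * N + 5)) + 'X^(4 * N + 4) :> {poly R}.
Proof.
set Y : {poly R} := 'X^(4 * N + 1).
have -> : 'X^(4 * N + 3) = 'X * ('X * Y) :> {poly R}.
  by rewrite /Y -!exprS; congr ('X^_); lia.
have -> : 'X^(4 * N + 2) = 'X * Y :> {poly R}.
  by rewrite /Y -!exprS; congr ('X^_); lia.
have -> : 'X^(4 * N + 4) = 'X * ('X * ('X * Y)) :> {poly R}.
  by rewrite /Y -!exprS; congr ('X^_); lia.
have -> : 'X^(8 * N + 5) = 'X * ('X * ('X * (Y * Y))) :> {poly R}.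
  by rewrite /Y -exprD -!exprS; congr ('X^_); lia.
ring.
Qed.

Lemma jacobi_finite N : 'X^N * oddpoch N = \sum_(j < (2 * N).+1) jterm N j.
Proof.
elim: N => [|N IH].
  by rewrite /oddpoch big_ord0 big_ord1 /jterm qbin0 /jexp -lock expr0 !mulr1.
set S := \sum_(j < (2 * N).+1) jterm N j.
have S1 : jterm N 0 + \sum_(j < (2 * N).+1) jterm N j.+1 = S.
  by rewrite /S -(@jterm_sum_ext N (2 * N).+2 (leqnSn _)) [RHS]big_ord_recl.
have S2 : jterm N 0 + (jterm N 1 + \sum_(j < (2 * N).+1) jterm N j.+2) = S.
  rewrite /S -(@jterm_sum_ext N (2 * N).+3 (leqW (leqnSn _))).
  by rewrite [in RHS]big_ord_recl [in RHS]big_ord_recl.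
rewrite /oddpoch big_ord_recr /= -/(oddpoch N) doubleS big_ord_recl big_ord_recl /=.
under eq_bigr => i _ do rewrite /bump /= jtermS.
rewrite -[bump 0 0]/1%N jterm0 jterm1 !big_split /= -!mulr_sumr.
have -> : 'X^(N.+1) * (oddpoch N * ((1 + 'X^(4 * N + 3)) * (1 + 'X^(4 * N + 1))))
    = ('X^N * oddpoch N) * ('X * ((1 + 'X^(4 * N + 3)) * (1 + 'X^(4 * N + 1))))
    :> {poly R}.
  by rewrite exprSr; ring.
rewrite IH -/S oddpoch_step_factor 2!mulrDr -{1}S2 -{1}S1; ring.
Qed.

(* Modulo X^(N+1), the j-th summand reduces to X^(tri (jidx N j)), where jidx N
   enumerates 0..2N: jexp N j - N is always triangular. *)
Definition jidx (N j : nat) : nat :=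
  if (N <= j)%N then (2 * (j - N))%N else (2 * (N - j)).-1.

Lemma jexp_tri N j : jexp N j = (N + tri (jidx N j))%N.
Proof.
apply/eqP; rewrite -(eqn_pmul2l (ltn0Sn 1)) mulnDr tri2 /jidx /jexp -lock.
by apply/eqP; case: (leqP N j) => h; nia.
Qed.

Lemma jexp_trunc N j : (j <= 2 * N)%N ->
  (N + N.+1 <= jexp N j + 4 * minn (2 * N - j).+1 j.+1)%N.
Proof.
rewrite /jexp -lock => h; case: (leqP N j) => h2.
  by rewrite (minn_idPl _); nia.
by rewrite (minn_idPr _); nia.
Qed.

Lemma jacobi_trunc N :
  congX N.+1 (oddpoch N * qpoch 4 (2 * N)) (\sum_(j < (2 * N).+1) 'X^(tri (jidx N j))).
Proof.
apply: (@congX_unshift _ _ N); rewrite mulrA jacobi_finite mulr_suml mulr_sumr.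
apply: congX_sum => j _; rewrite -exprD -jexp_tri /jterm -mulrA.
rewrite -[X in congX _ _ X]mulr1.
have hj : (j <= 2 * N)%N by rewrite -ltnS.
by apply: congX_le (congX_shift (qbin_qpoch_full (s:=4) hj)) _; apply: jexp_trunc.
Qed.

(* Splitting parts into odd and even ones, and squaring in characteristic 2:
   (X)_(4n) = oddprod (2n) (X^2)_(2n) and (X^2)_(2n)^2 = (X^4)_(2n). *)
Definition oddprod (K : nat) : {poly R} := \prod_(i < K) (1 + 'X^(2 * i + 1)).

Lemma qpoch_even_odd K : qpoch 1 (2 * K) = oddprod K * qpoch 2 K.
Proof.
elim: K => [|K IH]; first by rewrite /qpoch /oddprod !big_ord0 mulr1.
rewrite doubleS /qpoch !big_ord_recr /= -/(qpoch 1 (2 * K)) IH.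
rewrite /oddprod big_ord_recr /= -/(oddprod K) -/(qpoch 2 K) !mul1n.
have -> : ((2 * K).+2 = 2 * K.+1)%N by lia.
have -> : ((2 * K).+1 = 2 * K + 1)%N by lia.
ring.
Qed.

Lemma oddprod_oddpoch N : oddprod (2 * N) = oddpoch N.
Proof.
elim: N => [|N IH]; first by rewrite /oddprod /oddpoch !big_ord0.
rewrite doubleS /oddprod !big_ord_recr /= -/(oddprod (2 * N)) IH.
rewrite /oddpoch big_ord_recr /= -/(oddpoch N).
have -> : (2 * (2 * N) + 1 = 4 * N + 1)%N by lia.
have -> : (2 * (2 * N).+1 + 1 = 4 * N + 3)%N by lia.
ring.
Qed.

Lemma qpoch_sqr s K : qpoch s K * qpoch s K = qpoch (2 * s) K.
Proof.
rewrite /qpoch -big_split /=; apply: eq_bigr => i _.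
by rewrite sqr1X -exprD; congr (1 + 'X^_); lia.
Qed.

Lemma qpoch12_trunc n :
  congX n.+1 (qpoch 1 n * qpoch 2 n) (oddpoch n * qpoch 4 (2 * n)).
Proof.
have h1 : congX n.+1 (qpoch 1 n) (qpoch 1 (4 * n)).
  by apply: congX_sym; rewrite -[n.+1]mul1n; apply: qpoch_ext; lia.
have h2 : congX n.+1 (qpoch 2 n) (qpoch 2 (2 * n)).
  by apply: congX_sym; apply: congX_le (qpoch_ext (s:=2) _) _; lia.
apply: congX_trans (congXM h1 h2) _.
have -> : (4 * n = 2 * (2 * n))%N by lia.
by rewrite qpoch_even_odd oddprod_oddpoch -mulrA qpoch_sqr.
Qed.

(* thr_gf n t: the generating function of threshold-t partitions with parts
   and multiplicities at most n; its coefficient of X^n counts the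
   threshold-t partitions of n. *)
Definition thr_factor (n : nat) (t : nat) (i : 'I_n) : {poly R} :=
  \sum_(a < n.+1 | if (i < t)%N then (2 <= a)%N else (a <= 1)%N) 'X^(i.+1 * a).

Definition thr_gf (n t : nat) : {poly R} := \prod_(i < n) thr_factor t i.

Lemma coef_thr_gf n t :
  (thr_gf n t)`_n = (#|[set m : mtype n | is_partition m && threshold t m]|)%:R.
Proof.
rewrite /thr_gf /thr_factor.
rewrite (bigA_distr_big_dep _ (fun (i : 'I_n) (a : 'I_n.+1) => 'X^(i.+1 * a))).
rewrite coef_sum; under eq_bigr => m _ do rewrite prodrXr coefXn.
rewrite -sum1_card natr_sum big_mkcond [RHS]big_mkcond; apply: eq_bigr => m _.
rewrite in_set /is_partition -[m \in family _]/(threshold t m).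
by rewrite eq_sym andbC; case: (threshold t m); case: (_ == n).
Qed.

(* A part i below the threshold contributes X^(2i) / (1 + X^i) modulo
   X^(n+1), by a geometric sum in characteristic 2; a part above it
   contributes 1 + X^i. *)
Lemma geometric_ge2 (x : {poly R}) K :
  (\sum_(a < K | (2 <= a)%N) x ^+ a) * (1 + x) =
  if (2 <= K)%N then x ^+ 2 + x ^+ K else 0.
Proof.
elim: K => [|K IH]; first by rewrite big_ord0 mul0r.
rewrite big_mkcond big_ord_recr /= -big_mkcond /= mulrDl IH.
case: (ltnP K 2) => hK.
  case: K hK IH => [|[|K]] //= _ _; rewrite ?mul0r ?addr0 //.
  by rewrite addpp.
rewrite ifT; last exact: leqW.
rewrite [x ^+ K.+1]exprS; set y := x ^+ K.
have -> : x ^+ 2 + y + y * (1 + x) = x ^+ 2 + x * y + (y + y) by ring.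
by rewrite addpp addr0.
Qed.

Lemma thr_factor_low n t (i : 'I_n) : (i < t)%N ->
  congX n.+1 (thr_factor t i * (1 + 'X^(i.+1))) ('X^(2 * i.+1)).
Proof.
move=> hit; have i_lt := ltn_ord i.
have -> : thr_factor t i * (1 + 'X^(i.+1)) = 'X^(i.+1 * 2) + 'X^(i.+1 * n.+1).
  rewrite /thr_factor; under eq_bigl => a do rewrite hit.
  under eq_bigr => a _ do rewrite exprM.
  by rewrite geometric_ge2 ifT -?exprM //; lia.
rewrite mulnC -[X in congX _ _ X]addr0; apply: congXD => //.
by rewrite -['X^_]mulr1; apply: congX_XnM0; rewrite leq_pmull.
Qed.

Lemma thr_factor_high n t (i : 'I_n) : ~~ (i < t)%N -> thr_factor t i = 1 + 'X^(i.+1).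
Proof.
move=> hit; rewrite /thr_factor; under eq_bigl => a do rewrite (negbTE hit).
case: n i {hit} => [[]//|n] i.
by rewrite big_mkcond !big_ord_recl /= big1 ?addr0 ?muln0 ?muln1 ?expr0.
Qed.

Lemma prod_ord_widen n t (F : nat -> {poly R}) : (t <= n)%N ->
  \prod_(i < t) F i = \prod_(i < n) (if (i < t)%N then F i else 1).
Proof. by move=> ht; rewrite (big_ord_widen n F ht) big_mkcond. Qed.

Lemma Xtri t : 'X^(2 * tri t) = \prod_(i < t) 'X^(2 * i.+1) :> {poly R}.
Proof.
elim: t => [|t IH]; first by rewrite big_ord0 muln0 expr0.
by rewrite big_ord_recr /= -IH -exprD mulnDr.
Qed.

(* Multiplying by (X^2)_t clears the denominators of the parts below t. *)
Lemma thr_gf_qpoch n t : (t <= n)%N ->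
  congX n.+1 (thr_gf n t * qpoch 2 t) ('X^(2 * tri t) * qpoch 1 n).
Proof.
move=> ht; rewrite /qpoch Xtri (prod_ord_widen (fun i => 1 + 'X^(2 * i.+1)) ht).
rewrite (prod_ord_widen (fun i => 'X^(2 * i.+1)) ht) /thr_gf -!big_split /=.
apply: congX_prod => i _; rewrite mul1n; case: (ltnP i t) => h; last first.
  by rewrite thr_factor_high -?leqNgt // !mulr1 mul1r.
have -> : 1 + 'X^(2 * i.+1) = (1 + 'X^(i.+1)) * (1 + 'X^(i.+1)) :> {poly R}.
  by rewrite sqr1X -exprD addnn mul2n.
by rewrite mulrA; apply: congXM (thr_factor_low h) (congX_refl _).
Qed.

Lemma thr_gf_qbin n t : (t <= n)%N ->
  congX n.+1 (thr_gf n t) ('X^(2 * tri t) * qpoch 1 n * qbin 2 (2 * n) t).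
Proof.
move=> ht; have ht2 : (t <= 2 * n)%N by lia.
have inv : congX n.+1 (qbin 2 (2 * n) t * qpoch 2 t) 1.
  by apply: congX_le (qbin_qpoch (s:=2) ht2) _; lia.
have := congXM (congX_refl (thr_gf n t)) (congX_sym inv); rewrite mulr1 => h.
apply: congX_trans h _.
by rewrite mulrCA mulrC; apply: congXM (thr_gf_qpoch ht) (congX_refl _).
Qed.

(* Summing over thresholds: the q-binomial theorem for q = X^2. *)
Lemma sum_thr_gf n :
  congX n.+1 (\sum_(t < n.+1) thr_gf n t) (qpoch 1 n * qpoch 2 n).
Proof.
have gf : congX n.+1 (\sum_(t < n.+1) thr_gf n t)
    (qpoch 1 n * \sum_(t < n.+1) 'X^(2 * tri t) * qbin 2 (2 * n) t).
  rewrite mulr_sumr; apply: congX_sum => t _.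
  by rewrite mulrCA mulrA; apply: (@thr_gf_qbin n t (ltn_ord t)).
have binom : congX n.+1 (\sum_(t < n.+1) 'X^(2 * tri t) * qbin 2 (2 * n) t) (qpoch 2 n).
  have hk : (n.+1 <= (2 * n).+1)%N by lia.
  have le_n : (n.+1 <= 2 * tri n.+1)%N by rewrite tri2; nia.
  apply: congX_trans (congX_le (qbinomial_trunc (s:=2) hk) le_n) _.
  by apply: congX_le (qpoch_ext (s:=2) _) _; lia.
exact: congX_trans gf (congXM (congX_refl _) binom).
Qed.

Lemma c1_char2 n :
  (c1 n)%:R = (#|[pred j : 'I_(2 * n).+1 | tri (jidx n j) == n]|)%:R :> R.
Proof.
rewrite c1_sum natr_sum; under eq_bigr => t _ do rewrite -coef_thr_gf.
rewrite -coef_sum (sum_thr_gf (ltnSn n)) (qpoch12_trunc (ltnSn n)).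
rewrite (jacobi_trunc (ltnSn n)) coef_sum -sum1_card natr_sum [RHS]big_mkcond /=.
by apply: eq_bigr => j _; rewrite coefXn eq_sym inE; case: (_ == _).
Qed.

End CharTwoSeries.

(* jidx N is a bijection of 0..2N, so the count in c1_char2 is 1 or 0
   according to whether n is triangular. *)
Lemma jidx_inj N : {in [pred j | (j <= 2 * N)%N] &, injective (jidx N)}.
Proof.
by move=> j1 j2 _ _; rewrite /jidx; case: (leqP N j1); case: (leqP N j2); lia.
Qed.

Lemma jidx_onto N k : (k <= 2 * N)%N -> exists2 j, (j <= 2 * N)%N & jidx N j = k.
Proof.
move=> hk; have := odd_double_half k; case: (boolP (odd k)) => hodd /= hk2.
  by exists (N - k.+1 %/ 2)%N; rewrite /jidx; [lia | case: ifP => h; lia].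
by exists (N + k %/ 2)%N; rewrite /jidx ?leq_addr; lia.
Qed.

Lemma card_tri_hits n :
  #|[pred j : 'I_(2 * n).+1 | tri (jidx n j) == n]|
  = [exists k : 'I_n.+1, tri k == n] :> nat.
Proof.
set A := [pred j : 'I_(2 * n).+1 | tri (jidx n j) == n].
have le1 : (#|A| <= 1)%N.
  apply/card_le1_eqP => x y; rewrite !inE => /eqP hx /eqP hy.
  apply: val_inj; apply: (@jidx_inj n); rewrite ?inE ?leq_ord //.
  by apply: tri_inj; rewrite hx hy.
have pos : (0 < #|A|)%N = [exists k : 'I_n.+1, tri k == n].
  apply/card_gt0P/existsP => [[j /eqP hj] | [k /eqP hk]].
    have hk : (jidx n j < n.+1)%N.
      by rewrite ltnS; apply: leq_trans (leq_tri _) _; rewrite hj.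
    by exists (Ordinal hk); apply/eqP.
  have [|j hj ej] := @jidx_onto n k; first by have := ltn_ord k; lia.
  by exists (Ordinal (hj : j < (2 * n).+1)%N); rewrite inE /= ej hk.
by move: le1 pos; case: #|A| => [|[|]] //= _ <-.
Qed.

Lemma F2_odd a b : (a%:R : 'F_2) = b%:R -> odd a = odd b.
Proof.
move/(congr1 val); rewrite /= !val_Fp_nat // !modn2.
by case: (odd a); case: (odd b).
Qed.

Local Close Scope ring_scope.

Theorem theorem1 (n : nat) :
  odd (c1 n) <-> exists j : nat, n = (j * (j + 1)) %/ 2.
Proof.
have pchar2 : 2 \in [pchar 'F_2]%R by apply: pchar_Fp.
rewrite (F2_odd (c1_char2 pchar2 n)) card_tri_hits oddb.
by split=> /triangularP.
Qed.
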